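(* Let $m\ge 2$ and let $\mathcal{R}_m^4$ be the rose graph with $N_m=3m+1$ nodes. The global mean hitting times of the TURW, NBCRW and MERW on $\mathcal{R}_m^4$ are $$\langle T\rangle^{\mathrm T}=\frac{20m(3m-1)}{3(3m+1)}=\frac{20(N_m-1)(N_m-2)}{9N_m},$$ $$\langle T\rangle^{\mathrm B}=\frac{2m^3+12m^2-14m+4}{(3m+1)\sqrt{2m-1}}+\frac{36m^2-8m}{3(3m+1)}=\frac{2N_m^2+30N_m-192}{9\sqrt{6N_m-15}}+\frac{268+20\sqrt{6N_m-15}}{9N_m\sqrt{6N_m-15}}+\frac{12N_m-32}{9},$$ $$\langle T\rangle^{\mathrm M}=\frac{6m^3+36m^2+10m-12}{9m+3}=\frac{2N_m^3+30N_m^2-36N_m-104}{27N_m}.$$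
   Context: The rose graph $\mathcal{R}_m^4$ ($m\ge2$) is obtained by gluing $m$ cycles of length 4 at a single common node, the hub; it has $3m+1$ nodes. Let $\mathbf{A}=(a_{ij})$ be the adjacency matrix and $d_i$ the degrees. TURW: $p_{ij}=a_{ij}/d_i$. MERW: with $\lambda_1$ the largest eigenvalue of $\mathbf{A}$ and $\psi_1$ the positive unit eigenvector, $p_{ij}=\frac{a_{ij}}{\lambda_1}\frac{\psi_{1j}}{\psi_{1i}}$. NBCRW: the non-backtracking matrix $\mathbf{B}$ is indexed by directed edges $i\to j$ (two per undirected edge) with $B_{i\to j,k\to l}=1$ if $j=k$ and $i\ne l$, else $0$; $v$ is a non-negative eigenvector for its leading (Perron–Frobenius) eigenvalue; $x_i=\sum_{j\in\mathcal{N}_i}v_{i\to j}$; and $p_{ij}=a_{ij}x_j/\sum_k a_{ik}x_k$. For a random walk on $N$ nodes, the hitting time $T_{ij}$ is the expected number of steps to first reach $j$ starting from $i$, and the global mean hitting time is $\langle T\rangle=\frac{1}{N(N-1)}\sum_{i}\sum_{j\ne i}T_{ij}$. *)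

From HB Require Import structures.
From mathcomp Require Import all_boot all_order all_algebra.
From mathcomp Require Import all_classical all_reals all_analysis.
Set Implicit Arguments. Unset Strict Implicit. Unset Printing Implicit Defensive.
Import Order.TTheory GRing.Theory Num.Theory.
Import numFieldNormedType.Exports.
Local Open Scope ring_scope.

(* Labelling: node 0 is the hub; for c < m, the c-th 4-cycle is           *)
(*   0 -- 3c+1 -- 3c+2 -- 3c+3 -- 0.                                      *)
Definition rose_adj (n : nat) (i j : 'I_n) : bool :=
  let a := val i in let b := val j in
  if a == 0%N then (b != 0%N) && ((b.-1 %% 3)%N != 1%N)
  else if b == 0%N then ((a.-1 %% 3)%N != 1%N)
  else ((a.-1 %/ 3)%N == (b.-1 %/ 3)%N) && ((a.+1 == b) || (b.+1 == a)).

Section Walks.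
Variable R : realType.
Variable n : nat.

Definition adjmx (adj : 'I_n -> 'I_n -> bool) : 'M[R]_n :=
  \matrix_(i, j) (if adj i j then 1 else 0).

Definition degree (A : 'M[R]_n) (i : 'I_n) : R := \sum_j A i j.

Definition turw (A : 'M[R]_n) : 'M[R]_n :=
  \matrix_(i, j) (A i j / degree A i).

Definition merw (A : 'M[R]_n) (lam : R) (psi : 'cV[R]_n) : 'M[R]_n :=
  \matrix_(i, j) (A i j / lam * (psi j 0 / psi i 0)).

Definition merw_data (A : 'M[R]_n) (lam : R) (psi : 'cV[R]_n) : Prop :=
  [/\ eigenvalue A lam,
      (forall mu, eigenvalue A mu -> mu <= lam),
      A *m psi = lam *: psi,
      (forall i, 0 < psi i 0) &
      \sum_i psi i 0 ^+ 2 = 1].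

Definition dedge (adj : 'I_n -> 'I_n -> bool) : finType :=
  {p : 'I_n * 'I_n | adj p.1 p.2}.

Definition nbmx (adj : 'I_n -> 'I_n -> bool) (e f : dedge adj) : R :=
  if ((val e).2 == (val f).1) && ((val e).1 != (val f).2) then 1 else 0.

(* (x + i y) is a complex eigenvalue of the real matrix M (indexed by a   *)
(* finite type D), written out in real and imaginary parts: there is a     *)
(* nonzero complex vector a + i b with M (a + i b) = (x + i y) (a + i b). *)
Definition complex_eigenvalue (D : finType) (M : D -> D -> R) (x y : R) : Prop :=
  exists a b : D -> R,
    (exists e, a e != 0 \/ b e != 0) /\
    forall e, \sum_f M e f * a f = x * a e - y * b e /\
              \sum_f M e f * b f = x * b e + y * a e.

(* mu is the leading (Perron-Frobenius) eigenvalue of B and v is a        *)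
(* non-negative (nonzero) eigenvector for it.                             *)
Definition nb_data (adj : 'I_n -> 'I_n -> bool) (mu : R) (v : dedge adj -> R) : Prop :=
  [/\ (forall e, 0 <= v e),
      (exists e, v e != 0),
      (forall e, \sum_f nbmx e f * v f = mu * v e) &
      (forall x y, complex_eigenvalue (@nbmx adj) x y -> x ^+ 2 + y ^+ 2 <= mu ^+ 2)].

Definition nb_centrality (adj : 'I_n -> 'I_n -> bool) (v : dedge adj -> R) (i : 'I_n) : R :=
  \sum_(e : dedge adj | (val e).1 == i) v e.

Definition nbcrw (A : 'M[R]_n) (x : 'I_n -> R) : 'M[R]_n :=
  \matrix_(i, j) (A i j * x j / \sum_k A i k * x k).

(* Hitting times.  For a transition matrix P and target j, the taboo      *)
(* matrix Q forbids entering j; ((Q^k) *m P) i j = sum over paths          *)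
(* i = x_0, x_1, ..., x_k, x_{k+1} = j with x_1..x_k <> j of the product   *)
(* of transition probabilities, i.e. the probability that the first        *)
(* passage time to j from i equals k+1.                                   *)
Definition taboo (P : 'M[R]_n) (j : 'I_n) : 'M[R]_n :=
  \matrix_(k, l) (if l == j then 0 else P k l).

Definition first_passage (P : 'M[R]_n) (i j : 'I_n) (k : nat) : R :=
  ((taboo P j ^+ k *m P) i j).

Definition hitting_terms (P : 'M[R]_n) (i j : 'I_n) : nat -> R :=
  fun k => (k.+1)%:R * first_passage P i j k.

Definition hitting_time (P : 'M[R]_n) (i j : 'I_n) : R :=
  limn (series (hitting_terms P i j)).

Definition hitting_time_finite (P : 'M[R]_n) : Prop :=
  forall i j : 'I_n, i != j -> cvgn (series (hitting_terms P i j)).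

Definition gmht (P : 'M[R]_n) : R :=
  (\sum_i \sum_(j | j != i) hitting_time P i j) / (n%:R * (n%:R - 1)).

End Walks.

From HB Require Import structures.
From mathcomp Require Import all_boot all_order all_algebra.
From mathcomp Require Import all_classical all_reals all_analysis.
From mathcomp Require Import ring lra zify.
Set Implicit Arguments. Unset Strict Implicit. Unset Printing Implicit Defensive.
Import Order.TTheory GRing.Theory Num.Theory.
Import numFieldNormedType.Exports.
Local Open Scope classical_set_scope.
Local Open Scope ring_scope.

(* All three walks belong to one family [rose_walk m p]: from the hub the
   walker moves to one of its 2m neighbours uniformly; from a neighbour of the
   hub it goes back to the hub with probability p and otherwise to the tip of
   its petal; from a tip it moves to either neighbour with probability 1/2.
   TURW is p = 1/2; for MERW the Perron vector forces p = m/(m+1); for NBCRW a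
   non-negative non-backtracking eigenvector forces mu^4 = 2m-1, hence
   p = m/(m + sqrt(2m-1)).  The hitting times of the family solve the
   first-step equations in closed form, and on a finite chain a non-negative
   solution of these equations is the expected hitting time, because the
   taboo matrix contracts it geometrically. *)

Section NatTimesGeometric.
Variable R : realType.

Lemma natr_mul_expr_le (t : R) (K : nat) : 0 <= t <= 1 ->
  K%:R * t ^+ K * (1 - t) <= 1 - t ^+ K.
Proof.
case/andP=> t0 t1.
have -> : 1 - t ^+ K = (1 - t) * \sum_(i < K) t ^+ i.
  by rewrite -opprB subrX1 -mulNr opprB.
rewrite mulrC; apply: ler_wpM2l; first lra.
rewrite mulr_natl -[in X in _ *+ X](card_ord K) -sumr_const.
by apply: ler_sum => i _; apply: ler_wiXn2l => //; apply: ltnW.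
Qed.

(* With [t = sqrt r], [K r^K = (K t^K) t^K] and [K t^K (1 - t) <= 1]. *)
Lemma cvg_natr_mul_expr (r : R) : 0 <= r < 1 ->
  (fun K => K%:R * r ^+ K) @ \oo --> 0.
Proof.
case/andP=> r0 r1; pose t := Num.sqrt r.
have t0 : 0 <= t by exact: sqrtr_ge0.
have t1 : t < 1 by rewrite -sqrtr1 ltr_sqrt.
have rE : r = t ^+ 2 by rewrite sqr_sqrtr.
have bound K : 0 <= K%:R * r ^+ K <= (1 - t)^-1 * t ^+ K.
  rewrite mulr_ge0 ?exprn_ge0 //= rE -exprM mulnC exprM expr2 mulrA.
  apply: ler_wpM2r; first exact: exprn_ge0.
  rewrite -[X in _ <= X]mul1r ler_pdivlMr ?subr_gt0 //.
  have := @natr_mul_expr_le t K; rewrite t0 ltW // => /(_ isT).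
  have := exprn_ge0 K t0; lra.
apply: (@squeeze_cvgr _ _ _ _ (fun=> 0) (fun K => (1 - t)^-1 * t ^+ K)).
- by apply: nearW.
- exact: cvg_cst.
- by rewrite -(mulr0 (1 - t)^-1); apply: cvgMr; apply: cvg_expr; rewrite ger0_norm.
Qed.

End NatTimesGeometric.

Lemma ler_mulmx_col (R : numDomainType) n (M : 'M[R]_n) (x y : 'cV[R]_n) :
  (forall a b, 0 <= M a b) -> (forall a, x a 0 <= y a 0) ->
  forall a, (M *m x) a 0 <= (M *m y) a 0.
Proof.
move=> M0 xy a; rewrite !mxE; apply: ler_sum => l _.
exact: ler_wpM2l.
Qed.

Lemma exprmx_ge0 (R : numDomainType) n (M : 'M[R]_n) k :
  (forall a b, 0 <= M a b) -> forall a b, 0 <= (M ^+ k) a b.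
Proof.
move=> M0; elim: k => [|k IH] a b; first by rewrite expr0 mxE; case: (a == b).
by rewrite exprS -mulmxE mxE; apply: sumr_ge0 => l _; apply: mulr_ge0.
Qed.

Section FirstStepAnalysis.
Variables (R : realType) (n : nat) (P : 'M[R]_n) (j : 'I_n) (h : 'I_n -> R).
Hypothesis P_ge0 : forall a b, 0 <= P a b.
Hypothesis P_sum1 : forall a, \sum_b P a b = 1.
Hypothesis h_ge0 : forall a, 0 <= h a.
Hypothesis h_first_step : forall a, h a = 1 + \sum_(b | b != j) P a b * h b.

Local Notation Q := (taboo P j).
Local Notation hcol := (\col_a h a : 'cV[R]_n).
Local Notation ones := (const_mx 1 : 'cV[R]_n).

Lemma taboo_ge0 a b : 0 <= Q a b.
Proof. by rewrite mxE; case: ifP. Qed.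

Lemma taboo_mulmx (x : 'cV[R]_n) a :
  (Q *m x) a 0 = \sum_(b | b != j) P a b * x b 0.
Proof.
rewrite mxE [RHS]big_mkcond; apply: eq_bigr => b _.
by rewrite mxE; case: (b == j); rewrite ?mul0r.
Qed.

Lemma first_step_mx : hcol = ones + Q *m hcol.
Proof.
apply/matrixP => a z; rewrite ord1 [RHS]mxE taboo_mulmx !mxE h_first_step.
by congr (_ + _); apply: eq_bigr => b _; rewrite mxE.
Qed.

Lemma h_ge1 a : 1 <= h a.
Proof.
rewrite h_first_step lerDl; apply: sumr_ge0 => b _; exact: mulr_ge0.
Qed.

(* [(Q ^+ k *m ones) i 0] is the probability that the walk started at [i]
   avoids [j] during its first [k] steps. *)
Lemma first_passage_survival i k : first_passage P i j k =
  (Q ^+ k *m ones) i 0 - (Q ^+ k.+1 *m ones) i 0.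
Proof.
rewrite /first_passage exprSr -mulmxE -mulmxA !mxE -sumrB.
apply: eq_bigr => a _; rewrite -mulrBr; congr (_ * _).
rewrite taboo_mulmx; under eq_bigr do rewrite mxE mulr1.
by rewrite mxE -(P_sum1 a) (bigD1 j) //= addrK.
Qed.

Lemma hitting_series_remainder i K : series (hitting_terms P i j) K =
  h i - ((Q ^+ K *m hcol) i 0 + K%:R * (Q ^+ K *m ones) i 0).
Proof.
elim: K => [|K IH].
  by rewrite /series /= big_nil expr0 mul1mx mxE mul0r addr0 subrr.
have hK : (Q ^+ K *m hcol) i 0 = (Q ^+ K *m ones) i 0 + (Q ^+ K.+1 *m hcol) i 0.
  by rewrite [in LHS]first_step_mx mulmxDr exprSr -mulmxE mulmxA mxE.
rewrite seriesSr IH /hitting_terms first_passage_survival hK -natr1; ring.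
Qed.

(* [Q h = h - 1 <= (1 - 1/M) h] for any bound [M] of [h]. *)
Lemma taboo_contraction : exists2 r : R, 0 <= r < 1 &
  forall k a, (Q ^+ k *m hcol) a 0 <= r ^+ k * h a.
Proof.
pose M := 1 + \sum_a h a.
have hM a : h a <= M.
  rewrite /M (bigD1 a) //= addrCA lerDl; apply: addr_ge0 => //.
  exact: sumr_ge0.
have M1 : 1 <= M by apply: le_trans (h_ge1 j) (hM j).
have M0 : 0 < M by lra.
have Mi1 : M^-1 <= 1 by rewrite invf_le1.
exists (1 - M^-1); first by rewrite subr_ge0 Mi1 /= ltrBlDr ltrDl invr_gt0.
elim=> [|k IH] a; first by rewrite expr0 mul1mx mxE mul1r.
rewrite exprS -mulmxE -mulmxA.
apply: (le_trans (ler_mulmx_col (y := (1 - M^-1) ^+ k *: hcol) taboo_ge0 _ a)).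
  by move=> b; rewrite [leRHS]mxE [X in _ * X]mxE.
rewrite -scalemxAr mxE exprSr -mulrA; apply: ler_wpM2l; first by apply: exprn_ge0; rewrite subr_ge0.
rewrite taboo_mulmx; under eq_bigr do rewrite mxE.
have := h_first_step a; have : M^-1 * h a <= 1 by rewrite mulrC ler_pdivrMr // mul1r.
rewrite mulrBl mul1r; lra.
Qed.

Lemma cvg_hitting_series i : series (hitting_terms P i j) @ \oo --> h i.
Proof.
have [r /andP[r0 r1] contr] := taboo_contraction.
pose rem K := (Q ^+ K *m hcol) i 0 + K%:R * (Q ^+ K *m ones) i 0.
have rem_bound K : 0 <= rem K <= (r ^+ K + K%:R * r ^+ K) * h i.
  have onesh : (Q ^+ K *m ones) i 0 <= (Q ^+ K *m hcol) i 0.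
    by apply: ler_mulmx_col; [exact: exprmx_ge0 taboo_ge0 | move=> a; rewrite !mxE h_ge1].
  have ones0 : 0 <= (Q ^+ K *m ones) i 0.
    by rewrite mxE; apply: sumr_ge0 => a _; rewrite mxE mulr1 exprmx_ge0 // => *; exact: taboo_ge0.
  apply/andP; split; first by apply: addr_ge0; [exact: le_trans onesh | exact: mulr_ge0].
  rewrite mulrDl -mulrA lerD // ?contr //; apply: ler_wpM2l => //.
  exact: le_trans onesh (contr K i).
have : rem @ \oo --> 0.
  apply: (@squeeze_cvgr _ _ _ _ (fun=> 0) (fun K => (r ^+ K + K%:R * r ^+ K) * h i)).
  - exact: nearW.
  - exact: cvg_cst.
  - rewrite -(mul0r (h i)) -(addr0 0); apply: cvgMl; apply: cvgD.
      by apply: cvg_expr; rewrite ger0_norm.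
    by apply: cvg_natr_mul_expr; rewrite r0.
have -> : series (hitting_terms P i j) = fun K => h i - rem K.
  by apply: funext => K; rewrite hitting_series_remainder.
by move=> /(cvgB (cvg_cst (h i))); rewrite subr0.
Qed.

End FirstStepAnalysis.

Lemma hitting_time_first_step (R : realType) n (P : 'M[R]_n) (j : 'I_n) (h : 'I_n -> R) :
  (forall a b, 0 <= P a b) -> (forall a, \sum_b P a b = 1) ->
  (forall a, 0 <= h a) -> (forall a, h a = 1 + \sum_(b | b != j) P a b * h b) ->
  forall i, cvgn (series (hitting_terms P i j)) /\ hitting_time P i j = h i.
Proof.
move=> P0 P1 h0 hE i; have H := cvg_hitting_series (i := i) P0 P1 h0 hE.
by split; [exact: cvgP H | exact: cvg_lim H].
Qed.

Local Close Scope classical_set_scope.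

(* Node [3c + k + 1] ([k < 3]) has position [k] in petal [c]; position 1 is
   the tip, the node opposite the hub. *)
Definition petal_of (a : nat) : nat := (a.-1 %/ 3)%N.
Definition petal_pos (a : nat) : nat := (a.-1 %% 3)%N.

Definition rose_edge (a b : nat) : bool :=
  if a == 0%N then (b != 0%N) && (petal_pos b != 1%N)
  else if b == 0%N then petal_pos a != 1%N
  else (petal_of a == petal_of b) && ((a.+1 == b) || (b.+1 == a)).

Lemma rose_adjE n (i j : 'I_n) : rose_adj i j = rose_edge i j.
Proof. by []. Qed.

Lemma petal_ofE c k : (k < 3)%N -> petal_of (3 * c + k.+1) = c.
Proof. by move=> hk; rewrite /petal_of addnS /= mulnC divnMDl // divn_small // addn0. Qed.

Lemma petal_posE c k : (k < 3)%N -> petal_pos (3 * c + k.+1) = k.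
Proof. by move=> hk; rewrite /petal_pos addnS /= mulnC modnMDl modn_small. Qed.

Lemma eq_petal_node c d x y : (0 < x <= 3)%N -> (0 < y <= 3)%N ->
  (3 * c + x == 3 * d + y) = (c == d) && (x == y).
Proof.
move=> hx hy; apply/idP/idP => [/eqP H|/andP [/eqP -> /eqP ->] //].
by apply/andP; split; apply/eqP; lia.
Qed.

Lemma petal_node_eq0 c k : (3 * c + k.+1 == 0)%N = false.
Proof. by rewrite addnS. Qed.

Lemma hub_eq_petal_node c k : (0 == 3 * c + k.+1)%N = false.
Proof. by rewrite addnS. Qed.

Lemma petal_node_lt c m k : (c < m)%N -> (k <= 3)%N -> (3 * c + k < (3 * m).+1)%N.
Proof. by move=> *; lia. Qed.

Lemma rose_nodeP m a : (a < (3 * m).+1)%N ->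
  a = 0%N \/ exists2 c, (c < m)%N &
    [\/ a = (3 * c + 1)%N, a = (3 * c + 2)%N | a = (3 * c + 3)%N].
Proof.
case: a => [|a] ha; [by left | right; exists (a %/ 3)%N; first by rewrite ltn_divLR //; lia].
have := divn_eq a 3; have : (a %% 3 < 3)%N by rewrite ltn_mod.
by case: (a %% 3)%N => [|[|[|k]]] //= _ e; [constructor 1 | constructor 2 | constructor 3]; lia.
Qed.

Lemma rose_edge_hub_hub : rose_edge 0 0 = false. Proof. by []. Qed.

Lemma rose_edge_hub_petal c k : (k < 3)%N -> rose_edge 0 (3 * c + k.+1) = (k != 1%N).
Proof. by move=> hk; rewrite /rose_edge /= petal_node_eq0 petal_posE. Qed.

Lemma rose_edge_petal_hub c k : (k < 3)%N -> rose_edge (3 * c + k.+1) 0 = (k != 1%N).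
Proof. by move=> hk; rewrite /rose_edge petal_node_eq0 /= petal_posE. Qed.

Lemma rose_edge_petal_petal c k d k' : (k < 3)%N -> (k' < 3)%N ->
  rose_edge (3 * c + k.+1) (3 * d + k'.+1) = (c == d) && ((k.+1 == k') || (k'.+1 == k)).
Proof.
move=> hk hk'; rewrite /rose_edge !petal_node_eq0 /= !petal_ofE //.
by case: eqP => //= ->; rewrite -!addnS !eqn_add2l.
Qed.

Lemma rose_edge_ind m (Phi : nat -> nat -> Prop) :
  (forall c, (c < m)%N -> Phi 0%N (3 * c + 1)%N) ->
  (forall c, (c < m)%N -> Phi 0%N (3 * c + 3)%N) ->
  (forall c, (c < m)%N -> Phi (3 * c + 1)%N 0%N) ->
  (forall c, (c < m)%N -> Phi (3 * c + 1)%N (3 * c + 2)%N) ->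
  (forall c, (c < m)%N -> Phi (3 * c + 2)%N (3 * c + 1)%N) ->
  (forall c, (c < m)%N -> Phi (3 * c + 2)%N (3 * c + 3)%N) ->
  (forall c, (c < m)%N -> Phi (3 * c + 3)%N 0%N) ->
  (forall c, (c < m)%N -> Phi (3 * c + 3)%N (3 * c + 2)%N) ->
  forall a b, (a < (3 * m).+1)%N -> (b < (3 * m).+1)%N -> rose_edge a b -> Phi a b.
Proof.
move=> h1 h2 h3 h4 h5 h6 h7 h8 a b ha hb.
case: (rose_nodeP ha) => [-> | [c hc Ea]]; case: (rose_nodeP hb) => [-> | [d hd Eb]] //.
- by case: Eb => ->; rewrite rose_edge_hub_petal //= => _; auto.
- by case: Ea => ->; rewrite rose_edge_petal_hub //= => _; auto.
- by case: Ea => ->; case: Eb => ->; rewrite rose_edge_petal_petal //= ?andbF ?andbT // => /eqP <-; auto.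
Qed.

Section RoseSums.
Variables (V : nmodType) (m : nat).

Lemma sum_rose_nodes (F : nat -> V) :
  \sum_(i < (3 * m).+1) F i =
  F 0%N + \sum_(c < m) (F (3 * c + 1)%N + F (3 * c + 2)%N + F (3 * c + 3)%N).
Proof.
rewrite big_ord_recl /=; congr (_ + _).
have -> : \sum_(i < 3 * m) F (lift ord0 i) = \sum_(i < 3 * m) F i.+1.
  by apply: eq_bigr => i _; rewrite lift0.
elim: m => [|k IH]; first by rewrite muln0 !big_ord0.
rewrite mulnSr addn3 !big_ord_recr /= IH -!addrA; congr (_ + (F _ + (F _ + F _))); lia.
Qed.

Definition rose_nbr_sum (a : nat) (g : nat -> V) : V :=
  \sum_(l < (3 * m).+1) (if rose_edge a l then g l else 0).

Lemma rose_nbr_sum_hub g :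
  rose_nbr_sum 0 g = \sum_(c < m) (g (3 * c + 1)%N + g (3 * c + 3)%N).
Proof.
rewrite /rose_nbr_sum (sum_rose_nodes (fun l => if rose_edge 0 l then g l else 0))
  rose_edge_hub_hub add0r.
by apply: eq_bigr => c _; rewrite !rose_edge_hub_petal //= addr0.
Qed.

Let rose_nbr_sum_petal g c k : (c < m)%N -> (k < 3)%N ->
  rose_nbr_sum (3 * c + k.+1) g =
  (if k != 1%N then g 0%N else 0) +
  ((if (k.+1 == 0%N) || (1 == k)%N then g (3 * c + 1)%N else 0) +
   (if (k.+1 == 1%N) || (2 == k)%N then g (3 * c + 2)%N else 0) +
   (if (k.+1 == 2%N) || (3 == k)%N then g (3 * c + 3)%N else 0)).
Proof.
move=> hc hk; rewrite /rose_nbr_sum.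
rewrite (sum_rose_nodes (fun l => if rose_edge (3 * c + k.+1) l then g l else 0)).
rewrite rose_edge_petal_hub //; congr (_ + _).
rewrite (bigD1 (Ordinal hc)) //= big1 ?addr0; first by rewrite !rose_edge_petal_petal // eqxx.
move=> d hd; have cd : (c == d) = false.
  by apply: contraNF hd => /eqP E; apply/eqP/val_inj.
by rewrite !rose_edge_petal_petal // cd /= !addr0.
Qed.

Lemma rose_nbr_sum_side1 g c : (c < m)%N ->
  rose_nbr_sum (3 * c + 1) g = g 0%N + g (3 * c + 2)%N.
Proof. by move=> hc; rewrite (@rose_nbr_sum_petal g c 0) //= add0r addr0. Qed.

Lemma rose_nbr_sum_tip g c : (c < m)%N ->
  rose_nbr_sum (3 * c + 2) g = g (3 * c + 1)%N + g (3 * c + 3)%N.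
Proof. by move=> hc; rewrite (@rose_nbr_sum_petal g c 1) //= add0r addr0. Qed.

Lemma rose_nbr_sum_side3 g c : (c < m)%N ->
  rose_nbr_sum (3 * c + 3) g = g 0%N + g (3 * c + 2)%N.
Proof. by move=> hc; rewrite (@rose_nbr_sum_petal g c 2) //= add0r addr0. Qed.

End RoseSums.

Lemma sum_ord_const (R : ringType) m (K : R) : \sum_(c < m) K = m%:R * K.
Proof. by rewrite sumr_const card_ord mulr_natl. Qed.

Lemma sum_ord_but_one (R : ringType) m (F : 'I_m -> R) (c0 : 'I_m) K :
  (forall c, c != c0 -> F c = K) -> \sum_c F c = F c0 + (m%:R - 1) * K.
Proof.
move=> FK; rewrite (bigD1 c0) //= (eq_bigr (fun=> K)) // sumr_const cardC1 card_ord.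
have m_gt0 : (0 < m)%N by apply: leq_ltn_trans (ltn_ord c0).
by rewrite -{2}(prednK m_gt0) -natr1 addrK mulr_natl.
Qed.

Section RoseWalk.
Variables (R : realType) (m : nat) (p : R).
Local Notation N := (3 * m).+1.
Local Notation mm := (m%:R : R).

Definition rose_step (a b : nat) : R :=
  if a == 0%N then (2 * mm)^-1 else if b == 0%N then p
  else if petal_pos a == 1%N then 2^-1 else 1 - p.

Definition rose_walk : 'M[R]_N :=
  \matrix_(i, j) (if rose_edge i j then rose_step i j else 0).

(* Hitting times named target_from_source, solving the first-step equations;
   e.g. [hub_from_side] is the solution of [x = 1 + (1 - p) (1 + x)]. *)
Definition hub_from_side : R := (2 - p) / p.
Definition side_from_hub : R :=
  mm * (1 + p) + (2 - p) + (mm - 1) * (2 - p) * (1 + p) / p.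
Definition side_from_side : R := 2 * (2 - p + p * side_from_hub) / (1 + p).
Definition side_from_tip : R := 1 + side_from_side / 2.
Definition side_return : R := 1 + p * side_from_hub + (1 - p) * side_from_tip.
Definition tip_from_hub : R := (mm + 1 + (mm - 1) * hub_from_side) / (1 - p).
Definition tip_from_side : R := 1 + p * tip_from_hub.

(* [rose_hit j a] is the hitting time of [j] from [a]; for [a = j] it is the
   mean return time to [j]. *)
Definition rose_hit (j a : nat) : R :=
  if j == 0%N then
    (if a == 0%N then 1 + hub_from_side
     else if petal_pos a == 1%N then 1 + hub_from_side else hub_from_side)
  else if petal_pos j == 1%N then
    (if a == 0%N then tip_from_hub
     else if petal_of a == petal_of j then
       (if petal_pos a == 1%N then 1 + tip_from_side else tip_from_side)
     else if petal_pos a == 1%N then tip_from_hub + hub_from_side + 1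
     else tip_from_hub + hub_from_side)
  else
    (if a == 0%N then side_from_hub
     else if petal_of a == petal_of j then
       (if petal_pos a == 1%N then side_from_tip
        else if petal_pos a == petal_pos j then side_return else side_from_side)
     else if petal_pos a == 1%N then side_from_hub + hub_from_side + 1
     else side_from_hub + hub_from_side).

Definition rose_hit_step (j a : nat) : R :=
  rose_nbr_sum m a (fun l => rose_step a l * (if l == j then 0 else rose_hit j l)).

Lemma rose_walk_taboo_sum (i j : 'I_N) :
  \sum_(l | l != j) rose_walk i l * rose_hit j l = rose_hit_step j i.
Proof.
rewrite big_mkcond /rose_hit_step /rose_nbr_sum; apply: eq_bigr => l _.
by rewrite mxE val_eqE; case: (l == j); case: (rose_edge i l); rewrite ?mul0r ?mulr0.
Qed.

End RoseWalk.

Ltac rose_simpl := rewrite /rose_step /rose_hit ?petal_node_eq0 ?hub_eq_petal_node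
  ?petal_posE ?petal_ofE ?eq_petal_node ?eqxx //=.

Section RoseFirstStep.
Variables (R : realType) (m : nat) (p : R).
Hypotheses (m_gt0 : (0 < m)%N) (p_neq0 : p != 0) (p_neq1 : 1 - p != 0) (p_neqN1 : 1 + p != 0).
Local Notation N := (3 * m).+1.
Local Notation rose_hit := (rose_hit m p).
Local Notation rose_hit_step := (rose_hit_step m p).

Let m_neq0 : (m%:R : R) != 0. Proof. by rewrite pnatr_eq0 -lt0n. Qed.

Ltac solve_consts := rewrite /side_return /side_from_tip /side_from_side /side_from_hub
  /tip_from_side /tip_from_hub /hub_from_side; field;
  rewrite ?p_neq0 ?p_neq1 ?p_neqN1 ?m_neq0 //.

Lemma rose_hit_first_step_hub (i : 'I_N) : rose_hit 0 i = 1 + rose_hit_step 0 i.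
Proof.
rewrite /rose_hit_step; case: (rose_nodeP (ltn_ord i)) => [-> | [c hc Ei]].
  rewrite rose_nbr_sum_hub (eq_bigr (fun=> 2 * ((2 * m%:R)^-1 * hub_from_side p))).
    by rewrite sum_ord_const; rose_simpl; solve_consts.
  by move=> c _; rose_simpl; ring.
by case: Ei => ->; rewrite ?rose_nbr_sum_side1 ?rose_nbr_sum_tip ?rose_nbr_sum_side3 //;
  rose_simpl; solve_consts.
Qed.

Lemma rose_hit_first_step_petal c k (i : 'I_N) : (c < m)%N -> (k < 3)%N ->
  rose_hit (3 * c + k.+1) i = 1 + rose_hit_step (3 * c + k.+1) i.
Proof.
move=> hc hk; rewrite /rose_hit_step; case: (rose_nodeP (ltn_ord i)) => [-> | [d hd Ei]].
  rewrite rose_nbr_sum_hub (@sum_ord_but_one _ _ _ (Ordinal hc) (2 * ((2 * m%:R)^-1 *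
    ((if k == 1%N then tip_from_hub m p else side_from_hub m p) + hub_from_side p)))).
    by case: k hk => [|[|[|]]] // _; rose_simpl; solve_consts.
  move=> d ne; case: k hk => [|[|[|]]] // _; rose_simpl;
    by rewrite (negbTE (ne : val d != c)) /=; ring.
case: Ei => ->; rewrite ?rose_nbr_sum_side1 ?rose_nbr_sum_tip ?rose_nbr_sum_side3 //;
  case: (eqVneq d c) => [->|ne]; case: k hk => [|[|[|]]] // _; rose_simpl;
  rewrite ?(negbTE ne) /=; solve_consts.
Qed.

End RoseFirstStep.

Section RoseWalkHitting.
Variables (R : realType) (m : nat).
Local Notation N := (3 * m).+1.

Lemma rose_walk_ge0 (p : R) (i l : 'I_N) : 0 <= p <= 1 -> 0 <= rose_walk m p i l.
Proof.
case/andP=> p0 p1; rewrite mxE; case: ifP => // _; rewrite /rose_step.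
by do !case: ifP => _; rewrite ?invr_ge0 ?mulr_ge0 ?subr_ge0.
Qed.

Lemma rose_walk_sum1 (p : R) (i : 'I_N) : (0 < m)%N -> \sum_l rose_walk m p i l = 1.
Proof.
move=> m_gt0; have m_neq0 : (m%:R : R) != 0 by rewrite pnatr_eq0 -lt0n.
have -> : \sum_l rose_walk m p i l = rose_nbr_sum m i (rose_step m p i).
  by apply: eq_bigr => l _; rewrite mxE.
case: (rose_nodeP (ltn_ord i)) => [-> | [c hc Ei]].
  rewrite rose_nbr_sum_hub (eq_bigr (fun=> 2 * (2 * m%:R)^-1)) ?sum_ord_const.
    by field.
  by move=> c _; rewrite /rose_step /=; ring.
by case: Ei => ->; rewrite ?rose_nbr_sum_side1 ?rose_nbr_sum_tip ?rose_nbr_sum_side3 //;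
  rose_simpl; field.
Qed.

Lemma rose_hit_ge0 (p : R) j a : (0 < m)%N -> 0 < p < 1 -> 0 <= rose_hit m p j a.
Proof.
move=> m_gt0 /andP[p0 p1]; have m1 : (1 : R) <= m%:R by rewrite ler1n.
have hub_side_gt0 : 0 < hub_from_side p by rewrite divr_gt0 //; lra.
have side_hub_gt0 : 0 < side_from_hub m p.
  rewrite /side_from_hub; have : 0 < m%:R * (1 + p) by apply: mulr_gt0; lra.
  have : 0 <= (m%:R - 1) * (2 - p) * (1 + p) / p.
    by rewrite divr_ge0 ?mulr_ge0 //; lra.
  lra.
have side_side_gt0 : 0 < side_from_side m p.
  rewrite divr_gt0 ?mulr_gt0 //; last lra.
  have := mulr_gt0 p0 side_hub_gt0; lra.
have side_tip_gt0 : 0 < side_from_tip m p.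
  by rewrite /side_from_tip; have := divr_gt0 side_side_gt0 (ltr0n _ 2); lra.
have side_ret_gt0 : 0 < side_return m p.
  rewrite /side_return; have := mulr_gt0 p0 side_hub_gt0.
  have : 0 < (1 - p) * side_from_tip m p by rewrite mulr_gt0 //; lra.
  lra.
have tip_hub_gt0 : 0 < tip_from_hub m p.
  rewrite divr_gt0 //; last lra.
  have : 0 <= (m%:R - 1) * hub_from_side p by rewrite mulr_ge0 //; lra.
  lra.
have tip_side_gt0 : 0 < tip_from_side m p.
  by rewrite /tip_from_side; have := mulr_gt0 p0 tip_hub_gt0; lra.
by rewrite /rose_hit; do !case: ifP => _; lra.
Qed.

Lemma rose_hit_first_step (p : R) (i j : 'I_N) : (0 < m)%N -> 0 < p < 1 ->
  rose_hit m p j i = 1 + \sum_(l | l != j) rose_walk m p i l * rose_hit m p j l.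
Proof.
move=> m_gt0 /andP[p0 p1].
have p_neq0 : p != 0 by rewrite gt_eqF.
have p_neq1 : 1 - p != 0 by rewrite subr_eq0 eq_sym lt_eqF.
have p_neqN1 : 1 + p != 0 by rewrite gt_eqF //; lra.
rewrite rose_walk_taboo_sum.
case: (rose_nodeP (ltn_ord j)) => [-> | [c hc Ej]].
  exact: rose_hit_first_step_hub.
by case: Ej => ->; apply: rose_hit_first_step_petal.
Qed.

Lemma rose_walk_hitting_time (p : R) : (0 < m)%N -> 0 < p < 1 ->
  hitting_time_finite (rose_walk m p) /\
  forall i j, hitting_time (rose_walk m p) i j = rose_hit m p j i.
Proof.
move=> m_gt0 p01; have /andP[p0 p1] := p01.
have P0 i l : 0 <= rose_walk m p i l by apply: rose_walk_ge0; rewrite ltW //= ltW.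
have H (i j : 'I_N) := hitting_time_first_step (h := fun a : 'I_N => rose_hit m p j a) P0
  (fun a => rose_walk_sum1 p a m_gt0) (fun a => rose_hit_ge0 j a m_gt0 p01)
  (fun a => rose_hit_first_step a j m_gt0 p01) i.
by split=> [i j _ | i j]; case: (H i j).
Qed.

End RoseWalkHitting.

Lemma sum_offdiag (V : zmodType) n (F : 'I_n -> 'I_n -> V) :
  \sum_i \sum_(j | j != i) F j i = \sum_j (\sum_i F j i - F j j).
Proof.
have E i : \sum_(j | j != i) F j i = \sum_j F j i - F i i.
  by rewrite [X in _ = X - _](bigD1 i) //= addrC addrK.
by rewrite (eq_bigr _ (fun i _ => E i)) sumrB exchange_big -sumrB.
Qed.

Section RoseMeanHittingTime.
Variables (R : realType) (m : nat) (p : R).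
Local Notation N := (3 * m).+1.
Local Notation mm := (m%:R : R).

Definition hub_hit_total : R := mm * (3 * hub_from_side p + 1).
Definition side_hit_total : R :=
  side_from_hub m p + side_from_tip m p + side_from_side m p
  + (mm - 1) * (3 * (side_from_hub m p + hub_from_side p) + 1).
Definition tip_hit_total : R :=
  tip_from_hub m p + 2 * tip_from_side m p
  + (mm - 1) * (3 * (tip_from_hub m p + hub_from_side p) + 1).

Definition rose_gmht : R :=
  (hub_hit_total + mm * (2 * side_hit_total + tip_hit_total)) / ((3 * mm + 1) * (3 * mm)).

Lemma sum_rose_hit_hub : \sum_(i < N) rose_hit m p 0 i - rose_hit m p 0 0 = hub_hit_total.
Proof.
rewrite (sum_rose_nodes _ (rose_hit m p 0)) addrAC subrr add0r.
rewrite (eq_bigr (fun=> 3 * hub_from_side p + 1)) ?sum_ord_const //.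
by move=> c _; rose_simpl; ring.
Qed.

Lemma sum_rose_hit_petal c k : (c < m)%N -> (k < 3)%N ->
  \sum_(i < N) rose_hit m p (3 * c + k.+1) i - rose_hit m p (3 * c + k.+1) (3 * c + k.+1) =
  if k == 1%N then tip_hit_total else side_hit_total.
Proof.
move=> hc hk; rewrite (sum_rose_nodes _ (rose_hit m p (3 * c + k.+1))).
rewrite (@sum_ord_but_one _ _ _ (Ordinal hc) (3 * ((if k == 1%N then tip_from_hub m p
  else side_from_hub m p) + hub_from_side p) + 1)).
  by case: k hk => [|[|[|]]] // _; rose_simpl; rewrite /side_hit_total /tip_hit_total; ring.
move=> d ne; case: k hk => [|[|[|]]] // _; rose_simpl;
  by rewrite (negbTE (ne : val d != c)) /=; ring.
Qed.

Lemma gmht_rose_walk : (0 < m)%N -> 0 < p < 1 -> gmht (rose_walk m p) = rose_gmht.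
Proof.
move=> m_gt0 p01; have [_ hitE] := rose_walk_hitting_time m_gt0 p01.
rewrite /gmht; under eq_bigr => i _ do under eq_bigr => j _ do rewrite hitE.
rewrite (sum_offdiag (fun j i : 'I_N => rose_hit m p j i)).
rewrite (sum_rose_nodes _ (fun a => \sum_(i < N) rose_hit m p a i - rose_hit m p a a)).
rewrite sum_rose_hit_hub (eq_bigr (fun=> 2 * side_hit_total + tip_hit_total)).
  have -> : (N%:R : R) = 3 * m%:R + 1 by rewrite -natr1 natrM.
  by rewrite sum_ord_const /rose_gmht addrK.
by move=> c _; rewrite !sum_rose_hit_petal //=; ring.
Qed.

End RoseMeanHittingTime.

Ltac unfold_rose_gmht := rewrite /rose_gmht /hub_hit_total /side_hit_total /tip_hit_total
  /side_return /side_from_tip /side_from_side /side_from_hub /tip_from_side /tip_from_hub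
  /hub_from_side /=.
Ltac neq0_by_nra := repeat (apply/andP; split); try (apply/eqP => ?; nra).

Section ClosedForms.
Variables (R : realType) (m : nat).
Hypothesis m_ge2 : (2 <= m)%N.
Local Notation mm := (m%:R : R).

Lemma rose_gmht_turw :
  rose_gmht m (2^-1 : R) = 20 * mm * (3 * mm - 1) / (3 * (3 * mm + 1)).
Proof.
have h2 : (2 : R) <= mm by rewrite ler_nat.
by unfold_rose_gmht; field; neq0_by_nra.
Qed.

Lemma rose_gmht_merw :
  rose_gmht m (mm / (mm + 1)) = (6 * mm ^+ 3 + 36 * mm ^+ 2 + 10 * mm - 12) / (9 * mm + 3).
Proof.
have h2 : (2 : R) <= mm by rewrite ler_nat.
by unfold_rose_gmht; field; neq0_by_nra.
Qed.

Lemma rose_gmht_nbcrw :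
  rose_gmht m (mm / (mm + Num.sqrt (2 * mm - 1))) =
  (2 * mm ^+ 3 + 12 * mm ^+ 2 - 14 * mm + 4) / ((3 * mm + 1) * Num.sqrt (2 * mm - 1))
  + (36 * mm ^+ 2 - 8 * mm) / (3 * (3 * mm + 1)).
Proof.
have h2 : (2 : R) <= mm by rewrite ler_nat.
set s := Num.sqrt (2 * mm - 1).
have hs : s ^+ 2 = 2 * mm - 1 by rewrite sqr_sqrtr //; lra.
have s1 : 1 < s by rewrite -sqrtr1 ltr_sqrt; lra.
have mE : mm = (s ^+ 2 + 1) / 2 by rewrite hs; field.
by unfold_rose_gmht; rewrite mE; field; neq0_by_nra.
Qed.

End ClosedForms.

Lemma adjmx_rose_mulmx (R : realType) m (i : 'I_(3 * m).+1) (x : 'I_(3 * m).+1 -> R) :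
  \sum_k adjmx R (@rose_adj (3 * m).+1) i k * x k =
  rose_nbr_sum m i (fun l => x (inord l)).
Proof.
apply: eq_bigr => k _; rewrite mxE rose_adjE inord_val.
by case: (rose_edge i k); rewrite ?mul1r ?mul0r.
Qed.

Lemma rose_degree (R : realType) m (i : 'I_(3 * m).+1) :
  degree (adjmx R (@rose_adj (3 * m).+1)) i = if i == 0 :> nat then 2 * m%:R else 2.
Proof.
rewrite /degree (eq_bigr _ (fun k _ => esym (mulr1 _))).
rewrite (adjmx_rose_mulmx i (fun=> 1)).
case: (rose_nodeP (ltn_ord i)) => [-> | [c hc Ei]].
  by rewrite rose_nbr_sum_hub sum_ord_const /=; ring.
by case: Ei => ->; rewrite ?rose_nbr_sum_side1 ?rose_nbr_sum_tip ?rose_nbr_sum_side3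
  ?petal_node_eq0.
Qed.

Lemma turw_rose (R : realType) m : (0 < m)%N ->
  turw (adjmx R (@rose_adj (3 * m).+1)) = rose_walk m 2^-1.
Proof.
move=> m_gt0; have m_neq0 : (m%:R : R) != 0 by rewrite pnatr_eq0 -lt0n.
apply/matrixP => i j; rewrite !mxE rose_degree rose_adjE.
case: (rose_edge i j); last by rewrite mul0r.
by rewrite mul1r /rose_step; do !case: eqP => _ //; field.
Qed.

Section RosePositiveEigenvector.
Variables (R : realType) (m : nat) (lam : R) (psi : nat -> R).
Hypothesis m_gt0 : (0 < m)%N.
Hypothesis psi_gt0 : forall a, 0 < psi a.
Hypothesis psi_eig : forall a, (a < (3 * m).+1)%N -> rose_nbr_sum m a psi = lam * psi a.

Let psi_side1 c : (c < m)%N -> psi 0%N + psi (3 * c + 2)%N = lam * psi (3 * c + 1)%N.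
Proof. by move=> hc; rewrite -(rose_nbr_sum_side1 psi hc) psi_eig // petal_node_lt. Qed.

Let psi_tip c : (c < m)%N -> psi (3 * c + 1)%N + psi (3 * c + 3)%N = lam * psi (3 * c + 2)%N.
Proof. by move=> hc; rewrite -(rose_nbr_sum_tip psi hc) psi_eig // petal_node_lt. Qed.

Let psi_side3 c : (c < m)%N -> psi 0%N + psi (3 * c + 2)%N = lam * psi (3 * c + 3)%N.
Proof. by move=> hc; rewrite -(rose_nbr_sum_side3 psi hc) psi_eig // petal_node_lt. Qed.

Lemma rose_eigval_gt0 : 0 < lam.
Proof.
have := psi_tip m_gt0; have := psi_gt0 1; have := psi_gt0 2; have := psi_gt0 3.
rewrite !muln0 !add0n; nra.
Qed.

Let lam_neq0 : lam != 0. Proof. by rewrite gt_eqF // rose_eigval_gt0. Qed.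

Lemma rose_eigvec_sides c : (c < m)%N -> psi (3 * c + 3)%N = psi (3 * c + 1)%N.
Proof.
move=> hc; apply/eqP; rewrite -subr_eq0 -(mulrI_eq0 _ (lregP lam_neq0)).
by rewrite mulrBr -psi_side1 // -psi_side3 // subrr.
Qed.

Lemma rose_eigvec_tip c : (c < m)%N -> psi (3 * c + 2)%N = 2 * psi (3 * c + 1)%N / lam.
Proof.
move=> hc; apply: (mulfI lam_neq0); rewrite -psi_tip // rose_eigvec_sides //.
by field.
Qed.

Lemma rose_eigvec_side c : (c < m)%N ->
  psi (3 * c + 1)%N * (lam ^+ 2 - 2) = lam * psi 0%N.
Proof.
move=> hc; have E := psi_side1 hc; rewrite rose_eigvec_tip // in E.
have -> : psi 0%N = lam * psi (3 * c + 1)%N - 2 * psi (3 * c + 1)%N / lam by rewrite -E; field.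
by field.
Qed.

Lemma rose_eigval_shift_neq0 : lam ^+ 2 - 2 != 0.
Proof.
apply/eqP => L; have := rose_eigvec_side m_gt0; rewrite L mulr0 => /esym/eqP.
by rewrite mulf_eq0 (negbTE lam_neq0) gt_eqF.
Qed.

Lemma rose_eigvec_sideE c : (c < m)%N ->
  psi (3 * c + 1)%N = lam * psi 0%N / (lam ^+ 2 - 2).
Proof.
by move=> hc; apply: (mulIf rose_eigval_shift_neq0); rewrite rose_eigvec_side //; field;
  rewrite rose_eigval_shift_neq0.
Qed.

Lemma rose_eigval_sqr : (m%:R : R) = (lam ^+ 2 - 2) / 2.
Proof.
have := psi_eig (ltn0Sn _); rewrite rose_nbr_sum_hub.
under eq_bigr => c _ do rewrite rose_eigvec_sides // rose_eigvec_sideE //.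
rewrite sum_ord_const => eH.
have u0 : lam * psi 0%N != 0 by rewrite mulf_neq0 // gt_eqF.
apply: (mulIf u0); rewrite -[in RHS]eH; field.
exact: rose_eigval_shift_neq0.
Qed.

End RosePositiveEigenvector.

Lemma merw_rose (R : realType) m (lam : R) (psi : 'cV[R]_(3 * m).+1) : (0 < m)%N ->
  merw_data (adjmx R (@rose_adj (3 * m).+1)) lam psi ->
  merw (adjmx R (@rose_adj (3 * m).+1)) lam psi = rose_walk m (m%:R / (m%:R + 1)).
Proof.
move=> m_gt0 [_ _ Hev Hpos _].
pose ps a := psi (inord a) 0.
have ps_gt0 a : 0 < ps a by exact: Hpos.
have ps_eig a : (a < (3 * m).+1)%N -> rose_nbr_sum m a ps = lam * ps a.
  move=> ha; have := congr1 (fun M : 'cV[R]_(3 * m).+1 => M (inord a) 0) Hev.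
  by rewrite !mxE adjmx_rose_mulmx inordK.
have lam_neq0 : lam != 0 by rewrite gt_eqF // (rose_eigval_gt0 m_gt0 ps_gt0 ps_eig).
have L0 := rose_eigval_shift_neq0 m_gt0 ps_gt0 ps_eig.
have ps0 : ps 0%N != 0 by rewrite gt_eqF.
have side1 c hc := rose_eigvec_sideE m_gt0 ps_gt0 ps_eig (c := c) hc.
have side3 c hc := rose_eigvec_sides m_gt0 ps_gt0 ps_eig (c := c) hc.
have tip c hc := rose_eigvec_tip m_gt0 ps_gt0 ps_eig (c := c) hc.
have mE := rose_eigval_sqr m_gt0 ps_gt0 ps_eig.
have step : forall a b : nat, (a < (3 * m).+1)%N -> (b < (3 * m).+1)%N -> rose_edge a b ->
    1 / lam * (ps b / ps a) = rose_step m (m%:R / (m%:R + 1)) a b.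
  apply: rose_edge_ind => c hc; rose_simpl; rewrite ?side3 ?tip ?side1 // ?mE; field;
  by rewrite ?subrK ?expf_eq0 /= ?L0 ?ps0 ?lam_neq0.
apply/matrixP => i j; rewrite !mxE rose_adjE.
case E: (rose_edge i j); last by rewrite !mul0r.
by rewrite -step // /ps !inord_val.
Qed.

Section EdgeWeights.
Variables (R : realType) (n : nat) (adj : 'I_n -> 'I_n -> bool) (v : dedge adj -> R).

Definition edge_weight (i j : 'I_n) : R :=
  \sum_(e : dedge adj | ((val e).1 == i) && ((val e).2 == j)) v e.

Lemma edge_weightE (e : dedge adj) : v e = edge_weight (val e).1 (val e).2.
Proof.
rewrite /edge_weight (bigD1 e) ?eqxx //= big1 ?addr0 // => f /andP [/andP [h1 h2] hne].
case/eqP: hne; apply: val_inj.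
by apply: injective_projections; apply/eqP.
Qed.

Lemma edge_weight_nonedge i j : ~~ adj i j -> edge_weight i j = 0.
Proof.
move=> nij; rewrite /edge_weight big1 // => e /andP [/eqP h1 /eqP h2].
by move: (valP e) nij; rewrite h1 h2 => ->.
Qed.

Lemma edge_weight_ge0 i j : (forall e, 0 <= v e) -> 0 <= edge_weight i j.
Proof. by move=> v0; apply: sumr_ge0. Qed.

Lemma nb_centrality_edge_weight i : nb_centrality v i = \sum_j edge_weight i j.
Proof. exact: (partition_big (fun e : dedge adj => (val e).2) xpredT). Qed.

Lemma nb_eigen_edge_weight (mu : R) i j :
  (forall e, \sum_f nbmx R e f * v f = mu * v e) -> adj i j ->
  mu * edge_weight i j = nb_centrality v j - edge_weight j i.
Proof.
move=> hev hij; pose e0 : dedge adj := exist _ (i, j) hij.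
have -> : edge_weight i j = v e0 by rewrite (edge_weightE e0).
rewrite -hev (partition_big (fun f : dedge adj => (val f).2) xpredT) //=.
rewrite nb_centrality_edge_weight [in RHS](bigD1 i) //= addrAC subrr add0r.
rewrite [LHS](bigD1 i) //= big1 ?add0r => [|f /eqP h]; last first.
  by rewrite /nbmx /= h eqxx andbF mul0r.
apply: eq_bigr => l ne; rewrite /edge_weight big_mkcond [RHS]big_mkcond /=.
apply: eq_bigr => f _; rewrite /nbmx /=.
case: eqP => [h2|]; last by rewrite andbF.
rewrite h2 andbT (eq_sym i) ne andbT.
by rewrite eq_sym; case: eqP; rewrite ?mul1r ?mul0r.
Qed.

End EdgeWeights.

Section RoseNonBacktracking.
Variables (R : realType) (m : nat) (mu : R) (w : nat -> nat -> R).
Hypothesis w_ge0 : forall a b, 0 <= w a b.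
Hypothesis w_eig : forall a b, (a < (3 * m).+1)%N -> (b < (3 * m).+1)%N -> rose_edge a b ->
  mu * w a b = rose_nbr_sum m b (w b) - w b a.
(* [w a b] stands for the eigenvector entry on the directed edge [a -> b] and
   [x a] for the centrality of [a]. *)
Local Notation x a := (rose_nbr_sum m a (w a)).

Lemma nb_petal_cycle c : (c < m)%N ->
  [/\ mu * w 0%N (3 * c + 1)%N = w (3 * c + 1)%N (3 * c + 2)%N,
      mu * w (3 * c + 1)%N (3 * c + 2)%N = w (3 * c + 2)%N (3 * c + 3)%N,
      mu * w (3 * c + 2)%N (3 * c + 3)%N = w (3 * c + 3)%N 0%N &
      mu * w (3 * c + 3)%N 0%N = x 0%N - w 0%N (3 * c + 3)%N].
Proof.
move=> hc; have lt k : (k <= 3)%N -> (3 * c + k < (3 * m).+1)%N by exact: petal_node_lt.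
split; rewrite w_eig ?lt // ?rose_nbr_sum_side1 ?rose_nbr_sum_tip ?rose_nbr_sum_side3 //;
  rewrite ?rose_edge_hub_petal ?rose_edge_petal_hub ?rose_edge_petal_petal ?eqxx //; ring.
Qed.

Lemma nb_petal_cycle_rev c : (c < m)%N ->
  [/\ mu * w 0%N (3 * c + 3)%N = w (3 * c + 3)%N (3 * c + 2)%N,
      mu * w (3 * c + 3)%N (3 * c + 2)%N = w (3 * c + 2)%N (3 * c + 1)%N,
      mu * w (3 * c + 2)%N (3 * c + 1)%N = w (3 * c + 1)%N 0%N &
      mu * w (3 * c + 1)%N 0%N = x 0%N - w 0%N (3 * c + 1)%N].
Proof.
move=> hc; have lt k : (k <= 3)%N -> (3 * c + k < (3 * m).+1)%N by exact: petal_node_lt.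
split; rewrite w_eig ?lt // ?rose_nbr_sum_side1 ?rose_nbr_sum_tip ?rose_nbr_sum_side3 //;
  rewrite ?rose_edge_hub_petal ?rose_edge_petal_hub ?rose_edge_petal_petal ?eqxx //; ring.
Qed.

Lemma nb_hub_loop c : (c < m)%N ->
  mu ^+ 4 * w 0%N (3 * c + 1)%N = x 0%N - w 0%N (3 * c + 3)%N /\
  mu ^+ 4 * w 0%N (3 * c + 3)%N = x 0%N - w 0%N (3 * c + 1)%N.
Proof.
move=> hc; have [E1 E2 E3 E4] := nb_petal_cycle hc; have [F1 F2 F3 F4] := nb_petal_cycle_rev hc.
by split; [rewrite -E4 -E3 -E2 -E1 | rewrite -F4 -F3 -F2 -F1]; ring.
Qed.

Lemma nb_hub_total : mu ^+ 4 * x 0%N = (2 * m%:R - 1) * x 0%N.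
Proof.
have -> : mu ^+ 4 * x 0%N =
    \sum_(c < m) (x 0%N + x 0%N - (w 0%N (3 * c + 1)%N + w 0%N (3 * c + 3)%N)).
  rewrite {1}rose_nbr_sum_hub mulr_sumr; apply: eq_bigr => c _.
  by rewrite mulrDr; have [-> ->] := nb_hub_loop (ltn_ord c); ring.
by rewrite sumrB sum_ord_const -rose_nbr_sum_hub; ring.
Qed.

Lemma nb_hub_zero : x 0%N = 0 ->
  forall a b, (a < (3 * m).+1)%N -> (b < (3 * m).+1)%N -> rose_edge a b -> w a b = 0.
Proof.
move=> x0; have hub_out c : (c < m)%N -> w 0%N (3 * c + 1)%N = 0 /\ w 0%N (3 * c + 3)%N = 0.
  move=> hc; move: x0; rewrite rose_nbr_sum_hub => /psumr_eq0P.
  move=> /(_ (fun d _ => addr_ge0 (w_ge0 _ _) (w_ge0 _ _)) (Ordinal hc) isT) /= H.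
  have := w_ge0 0 (3 * c + 1); have := w_ge0 0 (3 * c + 3); split; lra.
apply: rose_edge_ind => c hc; have [z1 z3] := hub_out c hc;
  have [E1 E2 E3 _] := nb_petal_cycle hc; have [F1 F2 F3 _] := nb_petal_cycle_rev hc.
- exact: z1.
- exact: z3.
- by rewrite -F3 -F2 -F1 z3 !mulr0.
- by rewrite -E1 z1 mulr0.
- by rewrite -F2 -F1 z3 !mulr0.
- by rewrite -E2 -E1 z1 !mulr0.
- by rewrite -E3 -E2 -E1 z1 !mulr0.
- by rewrite -F1 z3 mulr0.
Qed.

Section HubNonzero.
Hypothesis m_ge2 : (2 <= m)%N.
Hypothesis x0_neq0 : x 0%N != 0.

Lemma nb_value_pow4 : mu ^+ 4 = 2 * m%:R - 1.
Proof.
apply/eqP; rewrite -subr_eq0 -(mulIr_eq0 _ (rregP x0_neq0)) mulrBl nb_hub_total.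
by rewrite subrr.
Qed.

Lemma nb_hub_weights c : (c < m)%N ->
  w 0%N (3 * c + 1)%N = x 0%N / (2 * m%:R) /\ w 0%N (3 * c + 3)%N = x 0%N / (2 * m%:R).
Proof.
move=> hc; have [L13 L31] := nb_hub_loop hc; have h2 : (2 : R) <= m%:R by rewrite ler_nat.
have mu41 : mu ^+ 4 - 1 != 0 by rewrite nb_value_pow4; apply/eqP => H; lra.
have sym : w 0%N (3 * c + 1)%N = w 0%N (3 * c + 3)%N.
  apply/eqP; rewrite -subr_eq0 -(mulrI_eq0 _ (lregP mu41)).
  by rewrite mulrBr !mulrBl L13 L31; apply/eqP; ring.
rewrite -sym nb_value_pow4 in L13; rewrite -sym.
have m_neq0 : (m%:R : R) != 0 by apply/eqP => H; lra.
have -> : x 0%N = 2 * m%:R * w 0%N (3 * c + 1)%N.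
  by rewrite -[LHS](subrK (w 0%N (3 * c + 1)%N)) -L13; ring.
by split; field.
Qed.

Lemma nb_centralities c : (c < m)%N ->
  [/\ x (3 * c + 1)%N = (mu ^+ 3 + mu) * (x 0%N / (2 * m%:R)),
      x (3 * c + 2)%N = 2 * mu ^+ 2 * (x 0%N / (2 * m%:R)) &
      x (3 * c + 3)%N = (mu ^+ 3 + mu) * (x 0%N / (2 * m%:R))].
Proof.
move=> hc; have [z1 z3] := nb_hub_weights hc.
have [E1 E2 E3 _] := nb_petal_cycle hc; have [F1 F2 F3 _] := nb_petal_cycle_rev hc.
rewrite rose_nbr_sum_side1 // rose_nbr_sum_tip // rose_nbr_sum_side3 //.
by split; [rewrite -F3 -F2 -F1 -E1 | rewrite -F2 -F1 -E2 -E1 | rewrite -E3 -E2 -E1 -F1];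
  rewrite z1 z3; ring.
Qed.

Lemma nb_hub_centrality : x 0%N = (mu ^+ 4 + 1) * (x 0%N / (2 * m%:R)).
Proof.
have h2 : (2 : R) <= m%:R by rewrite ler_nat.
by rewrite nb_value_pow4; field; apply/eqP => H; lra.
Qed.

Lemma nb_hub_centrality_gt0 : 0 < x 0%N / (2 * m%:R).
Proof.
have h2 : (2 : R) <= m%:R by rewrite ler_nat.
rewrite divr_gt0 //; last lra.
by rewrite lt_def x0_neq0 /= rose_nbr_sum_hub sumr_ge0 // => c _; rewrite addr_ge0.
Qed.

End HubNonzero.
End RoseNonBacktracking.

Lemma rose_centrality_transition (R : realType) m (mu a0 : R) (y : nat -> R) :
  (2 <= m)%N -> 0 < a0 -> mu ^+ 4 = 2 * m%:R - 1 ->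
  y 0%N = (mu ^+ 4 + 1) * a0 ->
  (forall c, (c < m)%N -> y (3 * c + 1)%N = (mu ^+ 3 + mu) * a0) ->
  (forall c, (c < m)%N -> y (3 * c + 2)%N = 2 * mu ^+ 2 * a0) ->
  (forall c, (c < m)%N -> y (3 * c + 3)%N = (mu ^+ 3 + mu) * a0) ->
  forall a b, (a < (3 * m).+1)%N -> (b < (3 * m).+1)%N -> rose_edge a b ->
  y b / rose_nbr_sum m a y = rose_step m (m%:R / (m%:R + mu ^+ 2)) a b.
Proof.
move=> m_ge2 a0_gt0 mu4 y0 y1 y2 y3; have h2 : (2 : R) <= m%:R by rewrite ler_nat.
have mE : (m%:R : R) = (mu ^+ 4 + 1) / 2 by rewrite mu4; field.
have mu2_gt0 : 0 < mu ^+ 2.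
  rewrite lt_def sqr_ge0 andbT sqrf_eq0; apply/eqP => mu0.
  by move: mu4; rewrite mu0 expr0n /=; lra.
have a0_neq0 : a0 != 0 by rewrite gt_eqF.
have tip_neq0 : (mu ^+ 3 + mu) * a0 + (mu ^+ 3 + mu) * a0 != 0.
  have -> : (mu ^+ 3 + mu) * a0 + (mu ^+ 3 + mu) * a0 = mu * ((mu ^+ 2 + 1) * (2 * a0)) by ring.
  have mu_neq0 : mu != 0 by apply/eqP => mu0; move: mu2_gt0; rewrite mu0 expr0n ltxx.
  by rewrite mulf_neq0 // mulf_neq0 //; apply/eqP => H; lra.
apply: rose_edge_ind => c hc.
1,2: rewrite rose_nbr_sum_hub (eq_bigr (fun=> 2 * ((mu ^+ 3 + mu) * a0))) => [|d _];
       last by rewrite y1 // y3 //; ring.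
1,2: by rewrite sum_ord_const ?y1 ?y3 // /rose_step /= mE; field; neq0_by_nra.
all: rewrite ?rose_nbr_sum_side1 ?rose_nbr_sum_tip ?rose_nbr_sum_side3 // ?y0 ?y1 ?y2 ?y3 //.
all: by rose_simpl; rewrite ?mE; field; rewrite ?tip_neq0; neq0_by_nra.
Qed.

(* Any non-negative nonzero eigenvector of the non-backtracking matrix gives
   the same walk. *)
Lemma nbcrw_rose (R : realType) m (mu : R) (v : dedge (@rose_adj (3 * m).+1) -> R) :
  (2 <= m)%N -> nb_data mu v ->
  nbcrw (adjmx R (@rose_adj (3 * m).+1)) (nb_centrality v) =
  rose_walk m (m%:R / (m%:R + Num.sqrt (2 * m%:R - 1))).
Proof.
move=> m_ge2 [v_ge0 [e1 ve1] hev _].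
pose w a b := edge_weight v (inord a) (inord b).
have w_ge0 a b : 0 <= w a b by exact: edge_weight_ge0.
have cent a : (a < (3 * m).+1)%N -> nb_centrality v (inord a) = rose_nbr_sum m a (w a).
  move=> ha; rewrite nb_centrality_edge_weight; apply: eq_bigr => l _.
  case E: (rose_edge a l); first by rewrite /w inord_val.
  by rewrite edge_weight_nonedge // rose_adjE !inordK // E.
have w_eig a b : (a < (3 * m).+1)%N -> (b < (3 * m).+1)%N -> rose_edge a b ->
    mu * w a b = rose_nbr_sum m b (w b) - w b a.
  by move=> ha hb hab; rewrite /w nb_eigen_edge_weight ?cent // rose_adjE !inordK.
pose y a := rose_nbr_sum m a (w a).
have yE (l : 'I_(3 * m).+1) : nb_centrality v l = y l by rewrite -{1}(inord_val l) cent.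
have y0_neq0 : y 0%N != 0.
  apply/eqP => y0; move: ve1; rewrite (edge_weightE v e1).
  have -> : edge_weight v (val e1).1 (val e1).2 = w (val e1).1 (val e1).2 by rewrite /w !inord_val.
  by rewrite (nb_hub_zero w_ge0 w_eig y0 (ltn_ord _) (ltn_ord _) (valP e1)) eqxx.
have mu4 := nb_value_pow4 w_eig y0_neq0.
have -> : Num.sqrt (2 * m%:R - 1) = mu ^+ 2.
  by rewrite -mu4 -[mu ^+ 4]/(mu ^+ (2 * 2)) exprM sqrtr_sqr ger0_norm // sqr_ge0.
apply/matrixP => i j; rewrite !mxE rose_adjE adjmx_rose_mulmx.
under [rose_nbr_sum _ _ _]eq_bigr => l _ do rewrite inord_val yE.
case E: (rose_edge i j); last by rewrite !mul0r.
rewrite mul1r yE.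
apply: (rose_centrality_transition (a0 := y 0%N / (2 * m%:R)) m_ge2 _ mu4) => //.
- exact: nb_hub_centrality_gt0 w_ge0 m_ge2 y0_neq0.
- exact: nb_hub_centrality w_eig m_ge2 y0_neq0.
all: by move=> c hc; case: (nb_centralities w_eig m_ge2 y0_neq0 hc).
Qed.

Lemma share_gt0_lt1 (R : numFieldType) (x y : R) : 0 < x -> 0 < y -> 0 < x / (x + y) < 1.
Proof. by move=> x0 y0; rewrite divr_gt0 ?addr_gt0 //= ltr_pdivrMr ?addr_gt0 // mul1r ltrDl. Qed.

Theorem theorem7 (R : realType) (m : nat) (hm : (2 <= m)%N) :
  let N := (3 * m).+1 in
  let A : 'M[R]_N := adjmx R (@rose_adj N) in
  let mm : R := m%:R in
  let NN : R := N%:R in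
  (* TURW *)
  (hitting_time_finite (turw A) /\
   gmht (turw A) = 20 * mm * (3 * mm - 1) / (3 * (3 * mm + 1)) /\
   gmht (turw A) = 20 * (NN - 1) * (NN - 2) / (9 * NN)) /\
  (* NBCRW *)
  (forall (mu : R) (v : dedge (@rose_adj N) -> R),
     nb_data mu v ->
     let P := nbcrw A (nb_centrality v) in
     hitting_time_finite P /\
     gmht P = (2 * mm ^+ 3 + 12 * mm ^+ 2 - 14 * mm + 4)
                / ((3 * mm + 1) * Num.sqrt (2 * mm - 1))
              + (36 * mm ^+ 2 - 8 * mm) / (3 * (3 * mm + 1)) /\
     gmht P = (2 * NN ^+ 2 + 30 * NN - 192) / (9 * Num.sqrt (6 * NN - 15))
              + (268 + 20 * Num.sqrt (6 * NN - 15)) / (9 * NN * Num.sqrt (6 * NN - 15))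
              + (12 * NN - 32) / 9) /\
  (* MERW *)
  (forall (lam : R) (psi : 'cV[R]_N),
     merw_data A lam psi ->
     let P := merw A lam psi in
     hitting_time_finite P /\
     gmht P = (6 * mm ^+ 3 + 36 * mm ^+ 2 + 10 * mm - 12) / (9 * mm + 3) /\
     gmht P = (2 * NN ^+ 3 + 30 * NN ^+ 2 - 36 * NN - 104) / (27 * NN)).
Proof.
move=> N A mm NN.
have m_gt0 : (0 < m)%N by apply: ltnW.
have m_ge2 : (2 : R) <= mm by rewrite ler_nat.
have m_pos : (0 : R) < mm by lra.
have NNE : NN = 3 * mm + 1 by rewrite /NN /N -natr1 natrM.
split; [|split].
- have p01 : 0 < (2^-1 : R) < 1 by apply/andP; split; lra.
  have [fin _] := rose_walk_hitting_time m_gt0 p01.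
  rewrite /A turw_rose // gmht_rose_walk // rose_gmht_turw //.
  by do !split => //; rewrite NNE; field; neq0_by_nra.
- move=> mu v nb P; rewrite /P /A (nbcrw_rose hm nb).
  set s := Num.sqrt (2 * mm - 1).
  have s_gt1 : 1 < s by rewrite -sqrtr1 ltr_sqrt; lra.
  have hs : s ^+ 2 = 2 * mm - 1 by rewrite sqr_sqrtr //; lra.
  have p01 := share_gt0_lt1 m_pos (lt_trans ltr01 s_gt1).
  have [fin _] := rose_walk_hitting_time m_gt0 p01.
  rewrite gmht_rose_walk // rose_gmht_nbcrw // -/mm -/s; do !split => //.
  have -> : Num.sqrt (6 * NN - 15) = 3 * s.
    have -> : 6 * NN - 15 = 3 ^+ 2 * (2 * mm - 1) by rewrite NNE; ring.
    by rewrite sqrtrM ?sqrtr_sqr ?ger0_norm // exprn_ge0.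
  have mE : mm = (s ^+ 2 + 1) / 2 by rewrite hs; field.
  by rewrite NNE mE; field; neq0_by_nra.
- move=> lam psi hd P; rewrite /P /A (merw_rose m_gt0 hd).
  have p01 := share_gt0_lt1 m_pos ltr01.
  have [fin _] := rose_walk_hitting_time m_gt0 p01.
  rewrite gmht_rose_walk // rose_gmht_merw //.
  by do !split => //; rewrite NNE; field; neq0_by_nra.
Qed.
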